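(* Let $X\in\mathbb{R}^{n\times p}$ have unit $\ell_2$-norm columns, let $\beta\in\mathbb{R}^p$ be $k$-sparse with support $\mathcal{S}$, let $\eta\in\mathbb{R}^n$, $\sigma> 0$, $y=X\beta+\eta$ and $w=X^\top y$. Suppose $X$ satisfies the $(k,b)$-screening condition for $\beta$ with parameter $b=b(n,p)$, and suppose the event $\|X^\top\eta\|_\infty\le 2\sqrt{\sigma^2\log p}$ holds. Let $T\subset[[p]]$ be any set with $\mathcal{S}\subset T$ and $|T|=q$, and define $$t:=\Big|\Big\{j\in T: |w_j|\ge \min_{l\in\mathcal{S}}|w_l|\Big\}\Big|.$$ Assume $\beta_{\min}-b\|\beta\|_2-2\sqrt{\sigma^2\log p}>0$. Then $$t\le \frac{q\,b\,\|\beta\|_2+\|\beta\|_1+2q\sqrt{\sigma^2\log p}}{\beta_{\min}-b\,\|\beta\|_2-2\sqrt{\sigma^2\log p}}.$$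
   Context: Notation: $[[p]]=\{1,\dots,p\}$; $p\ge 2$, $k<n$. $X$ has columns $X_1,\dots,X_p$ with $\|X_j\|_2=1$. $\beta$ is $k$-sparse with support $\mathcal{S}=\{i:\beta_i\neq0\}$, $|\mathcal{S}|=k$, $\mathcal{S}^c=[[p]]\setminus\mathcal{S}$, $\beta_{\min}=\min_{i\in\mathcal{S}}|\beta_i|$. $(k,b)$-screening condition: $X$ satisfies it for $\beta$ if there is $b=b(n,p)$ with $0<b<1/\sqrt{k}$ such that (SC-1) $\max_{i\in\mathcal{S}}\big|\sum_{j\in\mathcal{S},\,j\neq i}X_i^\top X_j\beta_j\big|\le b\|\beta\|_2$ and (SC-2) $\max_{i\in\mathcal{S}^c}\big|\sum_{j\in\mathcal{S}}X_i^\top X_j\beta_j\big|\le b\|\beta\|_2$. *)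

From Stdlib Require Import Reals Lra Lia List.
Import ListNotations.
Open Scope R_scope.

(* Indices are 0-based: [[p]] is rendered as {0, ..., p-1}.
   A matrix X in R^{n x p} is a function X : nat -> nat -> R, X r j = entry
   (row r < n, column j < p); vectors are functions nat -> R on {0..dim-1}. *)

Definition sumL (l : list nat) (f : nat -> R) : R :=
  fold_right (fun j acc => f j + acc) 0 l.

Definition sumR (m : nat) (f : nat -> R) : R := sumL (seq 0 m) f.

(* minimum of f over a list (the list is assumed nonempty; 0 on nil) *)
Definition minL (f : nat -> R) (l : list nat) : R :=
  match l with
  | [] => 0
  | x :: r => fold_left (fun m y => Rmin m (f y)) r (f x)
  end.

Definition colip (n : nat) (X : nat -> nat -> R) (i j : nat) : R :=
  sumR n (fun r => X r i * X r j).

Definition XtV (n : nat) (X : nat -> nat -> R) (v : nat -> R) (j : nat) : R :=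
  sumR n (fun r => X r j * v r).

Definition XV (p : nat) (X : nat -> nat -> R) (v : nat -> R) (r : nat) : R :=
  sumR p (fun j => X r j * v j).

Definition norm2 (p : nat) (v : nat -> R) : R := sqrt (sumR p (fun j => v j ^ 2)).
Definition norm1 (p : nat) (v : nat -> R) : R := sumR p (fun j => Rabs (v j)).

Definition supp (p : nat) (beta : nat -> R) : list nat :=
  filter (fun j => if Req_EM_T (beta j) 0 then false else true) (seq 0 p).

Definition beta_min (p : nat) (beta : nat -> R) : R :=
  minL (fun i => Rabs (beta i)) (supp p beta).

Definition screening (n p k : nat) (X : nat -> nat -> R) (beta : nat -> R) (b : R) : Prop :=
  0 < b /\ b < 1 / sqrt (INR k) /\
  (forall i, In i (supp p beta) ->
     Rabs (sumL (filter (fun j => negb (Nat.eqb j i)) (supp p beta))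
                (fun j => colip n X i j * beta j)) <= b * norm2 p beta) /\
  (forall i, (i < p)%nat -> ~ In i (supp p beta) ->
     Rabs (sumL (supp p beta) (fun j => colip n X i j * beta j)) <= b * norm2 p beta).

(* Write w_j = beta_j + r_j + (X^T eta)_j, where the interference r_j is the
   sum over the support minus j of (X_j^T X_i) beta_i; the screening condition
   bounds |r_j| by b ||beta||_2 for every j.  Hence every |w_j| is at most
   |beta_j| + b ||beta||_2 + 2 sqrt(sigma^2 log p), while on the support
   |w_j| >= D := beta_min - b ||beta||_2 - 2 sqrt(sigma^2 log p) > 0.  Each of
   the t indices counted has |w_j| >= min_S |w_l| >= D, so summing over T gives
   t D <= sum_T |w_j| <= ||beta||_1 + q (b ||beta||_2 + 2 sqrt(sigma^2 log p)). *)
From Stdlib Require Import Reals Lra Lia List.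
Import ListNotations.
Open Scope R_scope.

Lemma sumL_ext l f g : (forall x, In x l -> f x = g x) -> sumL l f = sumL l g.
Proof. induction l; simpl; intros H; auto. rewrite H, IHl; auto. Qed.

Lemma sumL_plus l f g : sumL l (fun x => f x + g x) = sumL l f + sumL l g.
Proof. induction l; simpl; [lra|]. rewrite IHl; ring. Qed.

Lemma sumL_scal l c f : sumL l (fun x => c * f x) = c * sumL l f.
Proof. induction l; simpl; [ring|]. rewrite IHl; ring. Qed.

Lemma sumL_plus_const l f c : sumL l (fun x => f x + c) = sumL l f + INR (length l) * c.
Proof. induction l; [simpl; lra|]. simpl length; rewrite S_INR; simpl sumL. rewrite IHl; ring. Qed.

Lemma sumL_swap l m (F : nat -> nat -> R) :
  sumL l (fun r => sumL m (F r)) = sumL m (fun i => sumL l (fun r => F r i)).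
Proof.
  induction l; simpl.
  - induction m; simpl; auto. rewrite <- IHm; ring.
  - rewrite IHl, <- sumL_plus. reflexivity.
Qed.

Lemma sumL_le l f g : (forall x, In x l -> f x <= g x) -> sumL l f <= sumL l g.
Proof.
  induction l; simpl; intros H; [lra|].
  pose proof (H a (or_introl eq_refl)). assert (sumL l f <= sumL l g) by auto. lra.
Qed.

Lemma sumL_nonneg l f : (forall x, In x l -> 0 <= f x) -> 0 <= sumL l f.
Proof.
  induction l; simpl; intros H; [lra|].
  pose proof (H a (or_introl eq_refl)). assert (0 <= sumL l f) by auto. lra.
Qed.

Lemma sumL_filter_le (P : nat -> bool) l f :
  (forall x, In x l -> 0 <= f x) -> sumL (filter P l) f <= sumL l f.
Proof.
  induction l; simpl; intros H; [lra|].
  pose proof (H a (or_introl eq_refl)).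
  assert (sumL (filter P l) f <= sumL l f) by auto. destruct (P a); simpl; lra.
Qed.

Lemma sumL_filter_eq (P : nat -> bool) l f :
  (forall x, In x l -> P x = false -> f x = 0) -> sumL (filter P l) f = sumL l f.
Proof.
  induction l; simpl; intros H; auto.
  destruct (P a) eqn:E; simpl; rewrite IHl; auto.
  rewrite H; auto; ring.
Qed.

Lemma sumL_const_le l f D :
  (forall x, In x l -> D <= f x) -> INR (length l) * D <= sumL l f.
Proof.
  induction l; intros H; [simpl; lra|].
  pose proof (H a (or_introl eq_refl)).
  assert (INR (length l) * D <= sumL l f) by (apply IHl; intros; apply H; right; auto).
  simpl length; rewrite S_INR; simpl sumL. lra.
Qed.

Lemma sumL_app l1 l2 f : sumL (l1 ++ l2) f = sumL l1 f + sumL l2 f.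
Proof. induction l1; simpl; [ring|]. rewrite IHl1; ring. Qed.

Lemma sumL_incl_le l L f :
  NoDup l -> incl l L -> (forall x, 0 <= f x) -> sumL l f <= sumL L f.
Proof.
  revert L. induction l as [|a l IH]; intros L ND HI Hf; simpl.
  - apply sumL_nonneg; auto.
  - inversion ND as [|? ? Ha ND']; subst.
    destruct (in_split a L (HI a (or_introl eq_refl))) as [L1 [L2 ->]].
    rewrite !sumL_app; simpl.
    assert (sumL l f <= sumL (L1 ++ L2) f); [|rewrite sumL_app in *; lra].
    apply IH; auto. intros x Hx.
    assert (Hx' : In x (L1 ++ a :: L2)) by (apply HI; right; auto).
    apply in_app_or in Hx'. apply in_or_app.
    destruct Hx' as [?|[?|?]]; auto. subst; contradiction.
Qed.

Lemma sumL_pick l j h : NoDup l -> (~ In j l -> h j = 0) ->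
  sumL l h = h j + sumL (filter (fun x => negb (Nat.eqb x j)) l) h.
Proof.
  intros ND Hj. destruct (in_dec Nat.eq_dec j l) as [Hin|Hout].
  - induction l as [|a l IH]; simpl in *; [contradiction|].
    inversion ND; subst. destruct (Nat.eqb a j) eqn:E; simpl.
    + apply Nat.eqb_eq in E; subst. f_equal. symmetry. apply sumL_filter_eq.
      intros x Hx Hf. destruct (Nat.eqb x j) eqn:E2; try discriminate.
      apply Nat.eqb_eq in E2; subst; contradiction.
    + apply Nat.eqb_neq in E. destruct Hin as [?|Hin]; [congruence|].
      rewrite IH; auto. ring.
  - rewrite Hj, Rplus_0_l by exact Hout. symmetry. apply sumL_filter_eq.
    intros x Hx Hf. destruct (Nat.eqb x j) eqn:E; try discriminate.
    apply Nat.eqb_eq in E; subst; contradiction.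
Qed.

Lemma fold_min_spec (f : nat -> R) r acc :
  fold_left (fun m y => Rmin m (f y)) r acc <= acc /\
  forall y, In y r -> fold_left (fun m y => Rmin m (f y)) r acc <= f y.
Proof.
  revert acc; induction r as [|a r IHr]; simpl; intros acc.
  - split; [lra|tauto].
  - destruct (IHr (Rmin acc (f a))) as [H1 H2].
    pose proof (Rmin_l acc (f a)). pose proof (Rmin_r acc (f a)).
    split; [lra|]. intros y [<-|Hy]; auto. lra.
Qed.

Lemma minL_le f l x : In x l -> minL f l <= f x.
Proof.
  destruct l as [|a l]; simpl; [contradiction|].
  destruct (fold_min_spec f l (f a)) as [H1 H2]. intros [<-|H]; auto.
Qed.

Lemma fold_min_ge (f : nat -> R) r acc D :
  D <= acc -> (forall y, In y r -> D <= f y) ->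
  D <= fold_left (fun m y => Rmin m (f y)) r acc.
Proof.
  revert acc; induction r; simpl; intros acc H1 H2; auto.
  apply IHr; auto. apply Rmin_glb; auto.
Qed.

Lemma minL_ge f l D : l <> [] -> (forall y, In y l -> D <= f y) -> D <= minL f l.
Proof. destruct l; simpl; [congruence|]. intros _ H. apply fold_min_ge; auto. Qed.

Lemma count_above_mul_le_sum (f : nat -> R) c D l :
  (forall x, 0 <= f x) -> D <= c ->
  INR (length (filter (fun j => if Rle_dec c (f j) then true else false) l)) * D
  <= sumL l f.
Proof.
  intros Hf HD. eapply Rle_trans.
  - apply sumL_const_le with (f := f). intros x Hx. apply filter_In in Hx as [_ Hx].
    destruct Rle_dec; [lra|discriminate].
  - apply sumL_filter_le; auto.
Qed.

Lemma supp_In p beta j : In j (supp p beta) <-> (j < p)%nat /\ beta j <> 0.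
Proof.
  unfold supp. rewrite filter_In, in_seq.
  destruct (Req_EM_T (beta j) 0); split; intros [H1 H2];
    try discriminate; split; try lia; auto.
Qed.

Lemma supp_NoDup p beta : NoDup (supp p beta).
Proof. apply NoDup_filter, seq_NoDup. Qed.

Lemma notin_supp p beta j : (j < p)%nat -> ~ In j (supp p beta) -> beta j = 0.
Proof.
  intros Hj Hn. destruct (Req_EM_T (beta j) 0) as [|Hb]; auto.
  exfalso. apply Hn, supp_In; auto.
Qed.

Lemma norm1_ge_sumL p beta T :
  NoDup T -> (forall j, In j T -> (j < p)%nat) ->
  sumL T (fun j => Rabs (beta j)) <= norm1 p beta.
Proof.
  intros ND HT. apply sumL_incl_le; auto using Rabs_pos.
  intros x Hx. apply in_seq. specialize (HT x Hx). lia.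
Qed.

Lemma colip_unit n X j : sqrt (sumR n (fun r => X r j ^ 2)) = 1 -> colip n X j j = 1.
Proof.
  intros H. assert (Hs : sumR n (fun r => X r j ^ 2) = 1).
  { destruct (Rle_dec 0 (sumR n (fun r => X r j ^ 2))) as [Hle|Hlt].
    - rewrite <- (sqrt_sqrt _ Hle), H; ring.
    - rewrite sqrt_neg_0 in H by lra. lra. }
  rewrite <- Hs. unfold colip, sumR. apply sumL_ext; intros; ring.
Qed.

Lemma XtV_XV_plus n p X beta eta j :
  XtV n X (fun r => XV p X beta r + eta r) j =
  sumL (supp p beta) (fun i => colip n X j i * beta i) + XtV n X eta j.
Proof.
  unfold XtV, XV, sumR.
  rewrite (sumL_ext _ _
    (fun r => sumL (seq 0 p) (fun i => X r j * X r i * beta i) + X r j * eta r)).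
  2:{ intros r _. rewrite Rmult_plus_distr_l, <- sumL_scal. f_equal.
      apply sumL_ext; intros; ring. }
  rewrite sumL_plus, sumL_swap. f_equal.
  unfold supp. rewrite sumL_filter_eq.
  - apply sumL_ext. intros i _. unfold colip, sumR.
    rewrite <- (Rmult_comm (beta i)), <- sumL_scal. apply sumL_ext; intros; ring.
  - intros x _ Hx. destruct (Req_EM_T (beta x) 0) as [E|]; try discriminate.
    rewrite E; ring.
Qed.

Definition interference (n p : nat) (X : nat -> nat -> R) (beta : nat -> R) (j : nat) : R :=
  sumL (filter (fun i => negb (Nat.eqb i j)) (supp p beta)) (fun i => colip n X j i * beta i).

Lemma XtV_response_decomp n p X beta eta j :
  (j < p)%nat -> colip n X j j = 1 ->
  XtV n X (fun r => XV p X beta r + eta r) j =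
  beta j + interference n p X beta j + XtV n X eta j.
Proof.
  intros Hj Hunit. rewrite XtV_XV_plus, (sumL_pick _ j).
  - rewrite Hunit, Rmult_1_l. reflexivity.
  - apply supp_NoDup.
  - intros Hn. rewrite (notin_supp p beta j Hj Hn). ring.
Qed.

(* Off the support nothing is filtered out, so SC-2 applies. *)
Lemma interference_bound n p k X beta b j :
  screening n p k X beta b -> (j < p)%nat ->
  Rabs (interference n p X beta j) <= b * norm2 p beta.
Proof.
  intros [_ [_ [SC1 SC2]]] Hj. unfold interference.
  destruct (in_dec Nat.eq_dec j (supp p beta)) as [Hin|Hout]; [apply SC1; auto|].
  rewrite sumL_filter_eq; [apply SC2; auto|].
  intros x Hx Hf. destruct (Nat.eqb x j) eqn:E; try discriminate.
  apply Nat.eqb_eq in E; subst; contradiction.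
Qed.

Lemma Rabs_plus3_bounds a r e :
  Rabs a - Rabs r - Rabs e <= Rabs (a + r + e) <= Rabs a + Rabs r + Rabs e.
Proof. unfold Rabs; repeat destruct Rcase_abs; lra. Qed.

Theorem lemma1 (n p k : nat) (X : nat -> nat -> R) (beta eta : nat -> R)
  (sigma b : R) (T : list nat) :
  (2 <= p)%nat -> (k < n)%nat ->
  (forall j, (j < p)%nat -> sqrt (sumR n (fun r => X r j ^ 2)) = 1) ->
  length (supp p beta) = k ->
  0 < sigma ->
  screening n p k X beta b ->
  (forall j, (j < p)%nat ->
     Rabs (XtV n X eta j) <= 2 * sqrt (sigma ^ 2 * ln (INR p))) ->
  NoDup T -> (forall j, In j T -> (j < p)%nat) ->
  (forall j, In j (supp p beta) -> In j T) ->
  let y := fun r => XV p X beta r + eta r in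
  let w := fun j => XtV n X y j in
  let q := length T in
  let t := length (filter (fun j =>
              if Rle_dec (minL (fun l => Rabs (w l)) (supp p beta)) (Rabs (w j))
              then true else false) T) in
  beta_min p beta - b * norm2 p beta - 2 * sqrt (sigma ^ 2 * ln (INR p)) > 0 ->
  INR t <= (INR q * b * norm2 p beta + norm1 p beta
            + 2 * INR q * sqrt (sigma ^ 2 * ln (INR p)))
           / (beta_min p beta - b * norm2 p beta - 2 * sqrt (sigma ^ 2 * ln (INR p))).
Proof.
  intros _ _ Hcol _ _ Hscr Heta ND HT _ y w q t HD.
  set (s := sqrt (sigma ^ 2 * ln (INR p))) in *.
  set (nb := norm2 p beta) in *.
  set (D := beta_min p beta - b * nb - 2 * s) in *.
  assert (Hw : forall j, (j < p)%nat ->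
    Rabs (beta j) - (b * nb + 2 * s) <= Rabs (w j) <= Rabs (beta j) + (b * nb + 2 * s)).
  { intros j Hj. unfold w, y. rewrite XtV_response_decomp by auto using colip_unit.
    pose proof (Rabs_plus3_bounds (beta j) (interference n p X beta j) (XtV n X eta j)).
    pose proof (interference_bound n p k X beta b j Hscr Hj) as Hint. fold nb in Hint.
    specialize (Heta j Hj). lra. }
  assert (Hsupp : supp p beta <> []).
  { intros E. unfold D, beta_min in HD. rewrite E in HD. simpl in HD.
    assert (0 <= nb) by apply sqrt_pos. assert (0 <= s) by apply sqrt_pos.
    destruct Hscr as [Hb _]. assert (0 <= b * nb) by (apply Rmult_le_pos; lra). lra. }
  assert (Hmin : D <= minL (fun l => Rabs (w l)) (supp p beta)).
  { apply minL_ge; auto. intros j Hj.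
    pose proof (minL_le (fun i => Rabs (beta i)) _ _ Hj).
    pose proof (Hw j (proj1 (proj1 (supp_In p beta j) Hj))). unfold D, beta_min in *. lra. }
  assert (Hcount : INR t * D <= sumL T (fun j => Rabs (w j)))
    by (apply count_above_mul_le_sum; auto using Rabs_pos).
  assert (Hsum : sumL T (fun j => Rabs (w j)) <= norm1 p beta + INR q * (b * nb + 2 * s)).
  { eapply Rle_trans.
    - apply sumL_le with (g := fun j => Rabs (beta j) + (b * nb + 2 * s)).
      intros j Hj. apply Hw, HT, Hj.
    - rewrite sumL_plus_const. pose proof (norm1_ge_sumL p beta T ND HT). unfold q; lra. }
  apply (Rmult_le_reg_r D); [lra|].
  unfold Rdiv. rewrite Rmult_assoc, Rinv_l, Rmult_1_r by lra. lra.
Qed.
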